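(* Let $A,B\in M_\ell(F)$ commute, let $Q=\mathrm{CSS}(H_X,H_Z)$ with $H_X=(A\ \ B)$, $H_Z=(B^T\ \ -A^T)$ be the two-block code, and fix idempotents $E_A,F_A$ associated with $A$ and $E_B,F_B$ associated with $B$. Define $$H_X^{(L)}=\begin{pmatrix}A&B\\0&I-E_A\end{pmatrix},\qquad H_X^{(R)}=\begin{pmatrix}A&B\\ I-E_B&0\end{pmatrix},$$ $Q'_\mu=\mathrm{CSS}(H_X^{(\mu)},H_Z)$ for $\mu\in\{L,R\}$; $Q''_L=\mathrm{CSS}(A,(H_Z)_L)$ with $(H_Z)_L=(B(I-F_A))^T$ and $Q''_R=\mathrm{CSS}(B,(H_Z)_R)$ with $(H_Z)_R=(A(I-F_B))^T$ (all of these are stabilizer CSS codes, i.e., the orthogonality condition holds); and classical codes $C_L=\{u\in F^\ell: Au=0,\ E_Bu=0\}$ and $C_R=\{u\in F^\ell: Bu=0,\ E_Au=0\}$ (the codes with parity-check matrices $\binom{A}{E_B}$ and $\binom{B}{E_A}$). Then for each $\mu\in\{L,R\}$, $$d_Z(Q)\le d_Z(Q'_\mu)\le d_Z(Q''_\mu)\le d(C_\mu).$$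
   Context: $F=\mathbb F_q$ is a finite field. For a matrix $H$ with $n$ columns, $C_H$ is its row space and $C_H^\perp$ its orthogonal complement in $F^n$. For $H_X,H_Z$ with $H_XH_Z^T=0$, $\mathrm{CSS}(H_X,H_Z)$ has $Z$-distance $d_Z=\min\{\mathrm{wgt}(c):c\in C_{H_X}^\perp\setminus C_{H_Z}\}$, where $\mathrm{wgt}$ is the Hamming weight and the minimum of the empty set is $\infty$. For a classical linear code $C$, $d(C)$ is the minimum weight of a nonzero codeword ($\infty$ if $C=\{0\}$). Idempotents associated with a matrix $A$: any $E_A,F_A$ with $E_A^2=E_A$, $F_A^2=F_A$, $\mathrm{rank}E_A=\mathrm{rank}F_A=\mathrm{rank}A$, $E_AA=AF_A=A$; similarly $E_B,F_B$ for $B$. *)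

From HB Require Import structures.
From mathcomp Require Import all_boot all_order all_algebra.
Set Implicit Arguments. Unset Strict Implicit. Unset Printing Implicit Defensive.
Import GRing.Theory.
Local Open Scope ring_scope.

(* Extended naturals: None = infinity. *)
Definition enat := option nat.
Definition ele (a b : enat) : bool :=
  match a, b with
  | _, None => true
  | None, Some _ => false
  | Some x, Some y => (x <= y)%N
  end.

Section Codes.
Variable F : finFieldType.

Definition wgt n (c : 'rV[F]_n) : nat := #|[set i | c 0 i != 0]|.

Definition in_perp m n (H : 'M[F]_(m, n)) (c : 'rV[F]_n) : bool :=
  H *m c^T == 0.

(* minimum of wgt over vectors satisfying P; None (infinity) if there are none.
   The default n of the big minn is never reached when the set is nonempty,
   since every weight is <= n. *)
Definition min_wgt n (P : pred 'rV[F]_n) : enat :=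
  if [exists c, P c] then Some (\big[minn/n]_(c | P c) wgt c) else None.

(* Z-distance of CSS(HX, HZ): min weight of c in C_{HX}^perp \ C_{HZ} *)
Definition dZ mx mz n (HX : 'M[F]_(mx, n)) (HZ : 'M[F]_(mz, n)) : enat :=
  min_wgt (fun c => in_perp HX c && ~~ (c <= HZ)%MS).

Definition dcode m n (H : 'M[F]_(m, n)) : enat :=
  min_wgt (fun c => in_perp H c && (c != 0)).

Definition assoc_idem l (A E Fm : 'M[F]_l) : Prop :=
  [/\ E *m E = E, Fm *m Fm = Fm, \rank E = \rank A & \rank Fm = \rank A]
  /\ (E *m A = A /\ A *m Fm = A).
End Codes.

From HB Require Import structures.
From mathcomp Require Import all_boot all_order all_algebra.
Set Implicit Arguments. Unset Strict Implicit. Unset Printing Implicit Defensive.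
Import Order.TTheory GRing.Theory.
Local Open Scope ring_scope.

(* Every inequality is an instance of one principle: a minimum weight over a
   set P is at most a minimum weight over a set Q as soon as some
   weight-non-increasing map sends Q into P (lemma [min_wgt_map]).
   - Q'_mu has more X-checks than Q and the same Z-checks, so its set of
     Z-logicals is a subset of that of Q ([dZ_stack_rows]).
   - A Z-logical c of Q''_L is sent to (c, 0) (resp. (0, c) for Q''_R), of
     the same weight ([dZ_pad_left], [dZ_pad_right]); it stays a non-trivial
     logical because every stabilizer y*H_Z whose second (resp. first) half
     vanishes has y in the left kernel of A^T (resp. B^T), on which
     (I - F_A)^T (resp. (I - F_B)^T) acts as the identity ([kernel_rowspace]).
   - A codeword c of C_L lies in the kernel of E_B, while the rows of
     (H_Z)_L = (B(I - F_A))^T are fixed by E_B^T, since E_B B = B; so c is a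
     Z-logical of Q''_L unless c = 0 ([dZ_le_dcode]); symmetrically for C_R.
   The commutation hypothesis A B = B A is only needed for the codes to be
   well defined; the inequalities themselves hold without it. *)

Section MinWeight.
Variable F : finFieldType.

Lemma wgt_le_size n (c : 'rV[F]_n) : (wgt c <= n)%N.
Proof. by rewrite /wgt (leq_trans (max_card _)) // card_ord. Qed.

Lemma min_wgt_map n n' (P : pred 'rV[F]_n) (Q : pred 'rV[F]_n')
    (f : 'rV[F]_n -> 'rV[F]_n') :
  (forall c, P c -> Q (f c) /\ (wgt (f c) <= wgt c)%N) ->
  ele (min_wgt Q) (min_wgt P).
Proof.
move=> fPQ; rewrite /min_wgt.
case: (boolP [exists c, P c]) => [/existsP[c0 Pc0]|_]; last by case: ifP.
have -> : [exists c, Q c] by apply/existsP; exists (f c0); case: (fPQ _ Pc0).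
have minQ c : Q c -> (\big[minn/n']_(d | Q d) wgt d <= wgt c)%N.
  exact: (@bigmin_le_cond _ nat).
apply: (@le_bigmin _ nat) => [|c /fPQ[Qfc wfc]]; last exact: leq_trans (minQ _ Qfc) wfc.
have [Qfc0 wfc0] := fPQ _ Pc0.
rewrite leEnat; exact: leq_trans (minQ _ Qfc0) (leq_trans wfc0 (wgt_le_size c0)).
Qed.

Lemma wgt_pad_right n m (c : 'rV[F]_n) : (wgt (row_mx c (0 : 'rV[F]_m)) <= wgt c)%N.
Proof.
rewrite /wgt; apply: leq_trans (leq_imset_card (@lshift n m) _).
apply/subset_leq_card/subsetP => i; rewrite inE.
case: (splitP i) => j ij.
  have -> : i = lshift m j by apply/val_inj.
  by rewrite row_mxEl => nz_cj; apply: imset_f; rewrite inE.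
have -> : i = rshift n j by apply/val_inj.
by rewrite row_mxEr mxE eqxx.
Qed.

Lemma wgt_pad_left n m (c : 'rV[F]_n) : (wgt (row_mx (0 : 'rV[F]_m) c) <= wgt c)%N.
Proof.
rewrite /wgt; apply: leq_trans (leq_imset_card (@rshift m n) _).
apply/subset_leq_card/subsetP => i; rewrite inE.
case: (splitP i) => j ij.
  have -> : i = lshift n j by apply/val_inj.
  by rewrite row_mxEl mxE eqxx.
have -> : i = rshift m j by apply/val_inj.
by rewrite row_mxEr => nz_cj; apply: imset_f; rewrite inE.
Qed.

End MinWeight.

Arguments min_wgt_map {F n n' P Q} f.

Section CSSDistances.
Variable F : finFieldType.

Lemma dZ_stack_rows mx mk mz n (HX : 'M[F]_(mx, n)) (K : 'M[F]_(mk, n))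
    (HZ : 'M[F]_(mz, n)) :
  ele (dZ HX HZ) (dZ (col_mx HX K) HZ).
Proof.
apply: (min_wgt_map id) => c /andP[perp_c nc]; split => //.
by move: perp_c; rewrite /in_perp mul_col_mx col_mx_eq0 => /andP[-> _].
Qed.

Lemma dZ_pad_left m r p q n k (A : 'M[F]_(m, n)) (B : 'M[F]_(m, k))
    (G : 'M[F]_(r, k)) (M : 'M[F]_(p, n)) (N : 'M[F]_(p, k)) (Z : 'M[F]_(q, n)) :
  (forall y : 'rV_p, y *m N = 0 -> (y *m M <= Z)%MS) ->
  ele (dZ (block_mx A B 0 G) (row_mx M N)) (dZ A Z).
Proof.
move=> stabM; apply: (min_wgt_map (fun c => row_mx c 0)) => c /andP[perp_c nc].
split; last exact: wgt_pad_right.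
apply/andP; split.
  by rewrite /in_perp tr_row_mx mul_block_col (eqP perp_c) trmx0 !mulmx0
             mul0mx !addr0 col_mx0.
apply/negP => /submxP[y]; rewrite mul_mx_row => /eq_row_mx[cE yN].
by move/negP: nc; apply; rewrite cE stabM.
Qed.

Lemma dZ_pad_right m r p q n k (A : 'M[F]_(m, n)) (B : 'M[F]_(m, k))
    (G : 'M[F]_(r, n)) (M : 'M[F]_(p, n)) (N : 'M[F]_(p, k)) (Z : 'M[F]_(q, k)) :
  (forall y : 'rV_p, y *m M = 0 -> (y *m N <= Z)%MS) ->
  ele (dZ (block_mx A B G 0) (row_mx M N)) (dZ B Z).
Proof.
move=> stabN; apply: (min_wgt_map (fun c => row_mx 0 c)) => c /andP[perp_c nc].
split; last exact: wgt_pad_left.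
apply/andP; split.
  by rewrite /in_perp tr_row_mx mul_block_col (eqP perp_c) trmx0 !mulmx0
             mul0mx !add0r col_mx0.
apply/negP => /submxP[y]; rewrite mul_mx_row => /eq_row_mx[yM cE].
by move/negP: nc; apply; rewrite cE stabN.
Qed.

Lemma dZ_le_dcode m q n (A : 'M[F]_(m, n)) (Z : 'M[F]_(q, n)) (E : 'M[F]_n) :
  Z *m E^T = Z -> ele (dZ A Z) (dcode (col_mx A E)).
Proof.
move=> ZE; apply: (min_wgt_map id) => c /andP[perp_c nc]; split => //.
move: perp_c; rewrite /in_perp mul_col_mx col_mx_eq0 => /andP[-> /eqP Ec] /=.
apply/negP => /submxP[z cE]; move/negP: nc; apply.
have cEc : c *m E^T = c by rewrite cE -mulmxA ZE.
have cE0 : c *m E^T = 0 by rewrite -[c]trmxK -trmx_mul Ec trmx0.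
by rewrite -cEc cE0.
Qed.

End CSSDistances.

Section Idempotents.
Variables (F : finFieldType) (l : nat).

(* For idempotents associated with K, the row spaces of K and F_K coincide,
   so (I - F_K)^T fixes the left kernel of K^T. *)
Lemma assoc_idem_kernel (K E Fm : 'M[F]_l) (y : 'rV[F]_l) :
  assoc_idem K E Fm -> y *m K^T = 0 -> y *m (1%:M - Fm)^T = y.
Proof.
case=> [[_ _ _ rankF] [_ KF]] yK.
have sKF : (K <= Fm)%MS by rewrite -{1}KF submxMl.
have /submxP[D FD] : (Fm <= K)%MS.
  by have [_ <-] := mxrank_leqif_sup sKF; rewrite rankF.
by rewrite linearB /= trmx1 mulmxBr mulmx1 FD trmx_mul mulmxA yK mul0mx subr0.
Qed.

Lemma kernel_rowspace n (K E Fm : 'M[F]_l) (M : 'M[F]_(l, n)) (y : 'rV[F]_l) :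
  assoc_idem K E Fm -> y *m K^T = 0 -> (y *m M <= (1%:M - Fm)^T *m M)%MS.
Proof.
by move=> iK yK; rewrite -(assoc_idem_kernel iK yK) -mulmxA submxMl.
Qed.

Lemma idem_fixes_rows (K E Fm X : 'M[F]_l) :
  assoc_idem K E Fm -> (K *m X)^T *m E^T = (K *m X)^T.
Proof. by case=> _ [EK _]; rewrite -trmx_mul mulmxA EK. Qed.

End Idempotents.

Theorem mainTheorem4 (F : finFieldType) (l : nat) (A B EA FA EB FB : 'M[F]_l) :
  A *m B = B *m A ->
  assoc_idem A EA FA ->
  assoc_idem B EB FB ->
  let HX := row_mx A B in
  let HZ := row_mx B^T (- A^T) in
  let HXL := block_mx A B 0 (1%:M - EA) in
  let HXR := block_mx A B (1%:M - EB) 0 in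
  let HZL := (B *m (1%:M - FA))^T in
  let HZR := (A *m (1%:M - FB))^T in
  (ele (dZ HX HZ) (dZ HXL HZ) /\ ele (dZ HXL HZ) (dZ A HZL)
     /\ ele (dZ A HZL) (dcode (col_mx A EB)))
  /\
  (ele (dZ HX HZ) (dZ HXR HZ) /\ ele (dZ HXR HZ) (dZ B HZR)
     /\ ele (dZ B HZR) (dcode (col_mx B EA))).
Proof.
move=> _ iA iB /=.
split; split; [exact: dZ_stack_rows | split | exact: dZ_stack_rows | split].
- apply: dZ_pad_left => y /eqP; rewrite mulmxN oppr_eq0 => /eqP yA.
  by rewrite trmx_mul (kernel_rowspace _ iA yA).
- exact: dZ_le_dcode (idem_fixes_rows _ iB).
- apply: dZ_pad_right => y yB.
  by rewrite trmx_mul mulmxN eqmx_opp (kernel_rowspace _ iB yB).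
- exact: dZ_le_dcode (idem_fixes_rows _ iA).
Qed.
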